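(* Let $V$ be a ground model, $\kappa$ an infinite cardinal, $\mathbb{A}\in V$ a Boolean algebra, and let $\dot{\mathcal{U}}_n$ ($n\in\omega$), $\dot{\mathcal{U}}$ be $\mathbb{M}_\kappa$-names for ultrafilters on $\mathbb{A}$, with $\varphi_n=\varphi_{\dot{\mathcal{U}}_n}$ and $\varphi=\varphi_{\dot{\mathcal{U}}}$. If $(\varphi_n)$ converges uniformly to $\varphi$, then for all but finitely many $n$ there is a condition $p_n\in\mathbb{M}_\kappa\setminus\{0\}$ such that $p_n\Vdash\dot{\mathcal{U}}_n=\dot{\mathcal{U}}$.
   Context: $\mathbb{M}_\kappa$ is the measure algebra $Bor(2^\kappa)/\mathcal{N}_\kappa$ of the standard product measure $\lambda_\kappa$ on $2^\kappa$, used as a forcing notion (conditions are nonzero elements). For an $\mathbb{M}_\kappa$-name $\dot{\mathcal{U}}$ with $\Vdash$ ''$\dot{\mathcal{U}}$ is an ultrafilter on $\mathbb{A}$'', $\varphi_{\dot{\mathcal{U}}}\colon\mathbb{A}\to\mathbb{M}_\kappa$ is the homomorphism $\varphi_{\dot{\mathcal{U}}}(A)=\llbracket A\in\dot{\mathcal{U}}\rrbracket$. $(\varphi_n)$ converges uniformly to $\varphi$ if for every $\varepsilon>0$ there is $N$ with $\lambda_\kappa(\varphi_n(A)\triangle\varphi(A))<\varepsilon$ for all $n>N$ and all $A\in\mathbb{A}$. *)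

From HB Require Import structures.
From mathcomp Require Import all_boot all_order all_algebra.
From mathcomp Require Import all_classical all_reals all_analysis.
Set Implicit Arguments. Unset Strict Implicit. Unset Printing Implicit Defensive.
Import Order.TTheory GRing.Theory Num.Theory.
Local Open Scope classical_set_scope.
Local Open Scope ring_scope.

Definition cyl_gen (K : choiceType) : set (set (K -> bool)) :=
  range (fun i : K => [set x : K -> bool | x i]).

Definition cantor_cube (K : choiceType) := g_sigma_algebraType (@cyl_gen K).

(* mu is the standard product measure lambda_K on 2^K: every finite cylinder
   fixing |s| coordinates has measure 2^{-|s|}.  (This determines mu uniquely
   on the generated sigma-algebra, by the pi-lambda theorem.) *)
Definition is_product_measure (R : realType) (K : choiceType)
  (mu : {measure set (cantor_cube K) -> \bar R}) : Prop :=
  forall (s : seq K) (b : K -> bool), uniq s ->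
    mu [set x : cantor_cube K | forall i, i \in s -> (x : K -> bool) i = b i]
      = ((2%:R^-1) ^+ size s)%:E.

Definition symd {T} (A B : set T) : set T := (A `\` B) `|` (B `\` A).

(* a.e.-equality: equality in the measure algebra Bor/N *)
Definition ae_eqset (R : realType) (K : choiceType)
  (mu : {measure set (cantor_cube K) -> \bar R}) (A B : set (cantor_cube K)) :=
  mu (symd A B) = 0%E.

(* phi : A -> M_K is a Boolean homomorphism into the measure algebra M_K,
   elements of M_K being represented by measurable sets modulo mu-null sets. *)
Definition is_hom_to_measure_algebra (R : realType) (K : choiceType)
  (mu : {measure set (cantor_cube K) -> \bar R})
  (d : Order.disp_t) (BA : ctbDistrLatticeType d)
  (phi : BA -> set (cantor_cube K)) : Prop :=
  [/\ forall a, measurable (phi a),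
      forall a b, ae_eqset mu (phi (Order.meet a b)) (phi a `&` phi b),
      forall a b, ae_eqset mu (phi (Order.join a b)) (phi a `|` phi b),
      forall a, ae_eqset mu (phi (Order.compl a)) (~` phi a) &
      ae_eqset mu (phi Order.bottom) set0 /\
        ae_eqset mu (phi Order.top) setT].

Definition unif_conv (R : realType) (K : choiceType)
  (mu : {measure set (cantor_cube K) -> \bar R})
  (d : Order.disp_t) (BA : ctbDistrLatticeType d)
  (phi_ : nat -> BA -> set (cantor_cube K)) (phi : BA -> set (cantor_cube K)) :=
  forall eps : R, 0 < eps -> exists N : nat, forall n, (N < n)%N ->
    forall a : BA, (mu (symd (phi_ n a) (phi a)) < eps%:E)%E.

(* p ||- "U_psi = U_phi", where p is a condition (a measurable set of positive
   measure, i.e. a nonzero element of M_K): since A is in the ground model,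
   [[U_psi = U_phi]] = /\_{a in A} [[a in U_psi <-> a in U_phi]]
                     = /\_{a} -(psi a Delta phi a), so p forces the equality iff
   p /\ (psi a Delta phi a) = 0 in M_K for every a. *)
Definition forces_eq (R : realType) (K : choiceType)
  (mu : {measure set (cantor_cube K) -> \bar R})
  (d : Order.disp_t) (BA : ctbDistrLatticeType d)
  (p : set (cantor_cube K)) (psi phi : BA -> set (cantor_cube K)) : Prop :=
  forall a : BA, mu (p `&` symd (psi a) (phi a)) = 0%E.

From HB Require Import structures.
From mathcomp Require Import all_boot all_order all_algebra.
From mathcomp Require Import all_classical all_reals all_analysis.
From mathcomp Require Import ring lra.
Import Order.TTheory GRing.Theory Num.Theory.
Local Open Scope classical_set_scope.
Local Open Scope ring_scope.

(* Write S a := phi_n a Δ phi a.  Since phi_n and phi are homomorphisms into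
   the measure algebra, S (a Δ b) = S a Δ S b up to null sets, so the S a form
   a group under symmetric difference.  In such a group every finite union has
   measure at most twice sup_a mu (S a): removing one generator S a, each
   member loses at least half of mu (S a) on the complement, by comparing S k
   with S k Δ S a.  Uniform convergence makes sup_a mu (S a) < 1/4 for large
   n, so the essential union D of all the S a (a countable union of finite
   unions) has measure at most 1/2, and p := ~ D is a condition of positive
   measure meeting every S a in a null set, i.e. p forces U_n = U. *)

(* Decides every atom [P x] by excluded middle first, making [tauto] classical. *)
Ltac tauto_cases x :=
  repeat match goal with
  | |- context [?P x] => have [/propT->|/propF->] := pselect (P x)
  end; tauto.

Ltac setP_by_cases :=
  apply/seteqP; split; let x := fresh "x" in
  intros x; rewrite /symd /=; tauto_cases x.

Section ae_iff.
Context {R : realType} {d} {T : measurableType d}.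
Variable mu : {measure set T -> \bar R}.

Lemma ae_iff_of_symd_null {A B : set T} : measurable A -> measurable B ->
  mu (symd A B) = 0%E -> {ae mu, forall x, A x <-> B x}.
Proof.
move=> mA mB AB; exists (symd A B); split => //.
  by apply: measurableU; apply: measurableD.
by move=> x /=; rewrite /symd /=; tauto_cases x.
Qed.

Lemma measure_ae_iff {A B : set T} : measurable A -> measurable B ->
  {ae mu, forall x, A x <-> B x} -> mu A = mu B.
Proof.
suff le_mu C D : measurable C -> measurable D ->
    {ae mu, forall x, C x <-> D x} -> (mu C <= mu D)%E.
  move=> mA mB AB; apply/eqP; rewrite eq_le !le_mu //.
  by apply: filterS AB => x; tauto.
move=> mC mD [N [mN N0 CDN]].
have C_sub : C `<=` D `|` N.
  move=> x Cx; have [Nx|Nx] := pselect (N x); first by right.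
  by left; have CDx : C x <-> D x := contra_notP (@CDN x) Nx; tauto.
rewrite -(measureU0 mD mN N0) le_measure ?inE //; exact: measurableU.
Qed.

End ae_iff.

Section finite_measure.
Context {R : realType} {d} {T : measurableType d}.
Variable mu : {measure set T -> \bar R}.
Hypothesis mu_fin : (mu setT < +oo)%E.

Definition rmeas (A : set T) : R := fine (mu A).

Lemma rmeasE A : measurable A -> mu A = (rmeas A)%:E.
Proof.
move=> mA; rewrite /rmeas fineK // ge0_fin_numE ?measure_ge0 //.
by rewrite (le_lt_trans _ mu_fin) // le_measure ?inE.
Qed.

Lemma rmeas_ge0 A : 0 <= rmeas A.
Proof. by rewrite /rmeas fine_ge0 // measure_ge0. Qed.

Lemma le_rmeas A B :
  measurable A -> measurable B -> A `<=` B -> rmeas A <= rmeas B.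
Proof. by move=> mA mB AB; rewrite -lee_fin -!rmeasE // le_measure ?inE. Qed.

Lemma rmeas_setDI {A B : set T} : measurable A -> measurable B ->
  rmeas A = rmeas (A `\` B) + rmeas (A `&` B).
Proof.
move=> mA mB; have mAB := measurableD mA mB; have mAIB := measurableI _ _ mA mB.
by apply: EFin_inj; rewrite EFinD -!rmeasE // (measureDI mu mA mB).
Qed.

Lemma rmeas_symd_setD {X Y Z : set T} :
  measurable X -> measurable Y -> measurable Z ->
  rmeas (X `\` Z) + rmeas (symd X Y `\` Z) =
    2 * rmeas (X `\` (Z `|` Y)) + rmeas (Y `\` Z).
Proof.
move=> mX mY mZ; have mXY : measurable (symd X Y).
  by apply: measurableU; apply: measurableD.
rewrite (rmeas_setDI (measurableD mX mZ) mY).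
rewrite (rmeas_setDI (measurableD mXY mZ) mY).
rewrite (rmeas_setDI (measurableD mY mZ) mX).
have -> : (X `\` Z) `\` Y = X `\` (Z `|` Y) by setP_by_cases.
have -> : (symd X Y `\` Z) `\` Y = X `\` (Z `|` Y) by setP_by_cases.
have -> : (X `\` Z) `&` Y = (Y `\` Z) `&` X by setP_by_cases.
have -> : (symd X Y `\` Z) `&` Y = (Y `\` Z) `\` X by setP_by_cases.
lra.
Qed.

Section symd_closed_family.
Variables (I : Type) (S : I -> set T).
Hypothesis mS : forall i, measurable (S i).
Hypothesis S_symd :
  forall i j, exists k, {ae mu, forall x, S k x <-> symd (S i) (S j) x}.

Lemma symd_closed_bigsetU_setD_le (l : seq I) (Z : set T) (e : R) :
  measurable Z -> 0 <= e -> (forall k, rmeas (S k `\` Z) <= e) ->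
  rmeas (\big[setU/set0]_(i <- l) S i `\` Z) <= 2 * e.
Proof.
elim: l Z e => [|a l IHl] Z e mZ e_ge0 SZ_le.
  by rewrite big_nil set0D /rmeas measure0 /= mulr_ge0.
have mZa : measurable (Z `|` S a) := measurableU _ _ mZ (mS a).
have mU : measurable (\big[setU/set0]_(i <- l) S i).
  exact: bigsetU_measurable.
(* S k and a witness k' for S k Δ S a cannot both be large outside Z: by
   rmeas_symd_setD their masses there add up to twice the mass of S k outside
   Z ∪ S a plus that of S a outside Z. *)
have SZa_le k : rmeas (S k `\` (Z `|` S a)) <= e - rmeas (S a `\` Z) / 2.
  have [k' Sk'] := S_symd k a.
  have k'E : rmeas (S k' `\` Z) = rmeas (symd (S k) (S a) `\` Z).
    congr fine; apply: measure_ae_iff; [exact: measurableD|..].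
      by apply: measurableD => //; apply: measurableU; apply: measurableD.
    by apply: filterS Sk' => x /=; tauto.
  have := rmeas_symd_setD (mS k) (mS a) mZ.
  have := SZ_le k; have := SZ_le k'; lra.
have := IHl _ _ mZa (le_trans (rmeas_ge0 _) (SZa_le a)) SZa_le.
have mSaU := measurableU _ _ (mS a) mU.
rewrite big_cons (rmeas_setDI (measurableD mSaU mZ) (mS a)).
have -> : ((S a `|` \big[setU/set0]_(i <- l) S i) `\` Z) `\` S a =
  \big[setU/set0]_(i <- l) S i `\` (Z `|` S a) by setP_by_cases.
have -> : ((S a `|` \big[setU/set0]_(i <- l) S i) `\` Z) `&` S a = S a `\` Z
  by setP_by_cases.
lra.
Qed.

End symd_closed_family.

Lemma bigsetU_bounded_ae_cover (I : Type) (F : I -> set T) (c : R) :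
  (forall i, measurable (F i)) ->
  (forall l : seq I, rmeas (\big[setU/set0]_(i <- l) F i) <= c) ->
  exists D, [/\ measurable D, rmeas D <= c & forall i, mu (F i `\` D) = 0%E].
Proof.
(* D collects finite unions whose masses approach their supremum, so F i can
   only add mass 1/(k+1) to the k-th of them. *)
move=> mF F_le; pose U l := \big[setU/set0]_(i <- l) F i.
have mU l : measurable (U l) by exact: bigsetU_measurable.
pose E := range (rmeas \o U).
have supE : has_sup E.
  by split; [exists (rmeas (U [::])), [::]|exists c => _ [l _ <-]; exact: F_le].
have /choice[L L_gt] : forall k, exists l, sup E - k.+1%:R^-1 < rmeas (U l).
  move=> k; have k_gt0 : 0 < k.+1%:R^-1 :> R by rewrite invr_gt0.
  by have [_ [l _ <-] ?] := sup_adherent k_gt0 supE; exists l.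
pose D := \bigcup_k U (L k).
have mD : measurable D by exact: bigcupT_measurable.
exists D; split => //.
- pose G n := \big[setU/set0]_(k < n.+1) U (L k).
  have mG n : measurable (G n) by exact: bigsetU_measurable.
  have G_le n : rmeas (G n) <= c.
    by have := F_le (flatten [seq L k | k <- index_iota 0 n.+1]);
      rewrite big_flatten big_map big_mkord.
  have DE : D = \bigcup_n G n by rewrite (bigcup_bigsetU_bigcup (U \o L)).
  have G_nd : nondecreasing_seq G.
    move=> m n mn; apply/subsetPset.
    exact: (@subset_bigsetU _ (U \o L) m.+1 n.+1).
  have := nondecreasing_cvg_mu (mu := mu) mG (bigcupT_measurable _ mG) G_nd.
  rewrite -DE => cvG; rewrite -lee_fin -rmeasE // -(cvg_lim _ cvG) //.
  apply: lime_le; first by apply/cvg_ex; exists (mu D).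
  by apply: nearW => n /=; rewrite rmeasE // lee_fin.
- move=> i; have mFD : measurable (F i `\` D) := measurableD (mF i) mD.
  rewrite rmeasE //; congr (_%:E); apply/eqP.
  rewrite eq_le rmeas_ge0 andbT leNgt.
  apply/negP => /ltr_add_invr[k]; rewrite add0r; apply/negP; rewrite -leNgt.
  have sup_ge : rmeas (U (i :: L k)) <= sup E.
    by apply: sup_upper_bound => //; exists (i :: L k).
  have := rmeas_setDI (mU (i :: L k)) (mU (L k)).
  have -> : U (i :: L k) `\` U (L k) = F i `\` U (L k).
    by rewrite /U big_cons; setP_by_cases.
  have -> : U (i :: L k) `&` U (L k) = U (L k).
    by rewrite /U big_cons; setP_by_cases.
  have : rmeas (F i `\` D) <= rmeas (F i `\` U (L k)).
    apply: le_rmeas => //; first exact: measurableD.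
    by apply: setDS => x ?; exists k.
  by have := L_gt k; move: (k.+1%:R^-1 : R) => e; lra.
Qed.

End finite_measure.

Definition bsymd {d} {BA : ctbDistrLatticeType d} (a b : BA) : BA :=
  Order.join (Order.meet a (Order.compl b)) (Order.meet b (Order.compl a)).

Section hom_to_measure_algebra.
Context {R : realType} {K : choiceType}.
Variable mu : {measure set cantor_cube K -> \bar R}.
Context {d} {BA : ctbDistrLatticeType d}.

Lemma hom_bsymd {f : BA -> set (cantor_cube K)} a b :
  is_hom_to_measure_algebra mu f ->
  {ae mu, forall x, f (bsymd a b) x <-> symd (f a) (f b) x}.
Proof.
case=> mf fI fU fC _.
have fJ := ae_iff_of_symd_null mu (mf _) (measurableU _ _ (mf _) (mf _))
  (fU (Order.meet a (Order.compl b)) (Order.meet b (Order.compl a))).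
have fM1 := ae_iff_of_symd_null mu (mf _) (measurableI _ _ (mf _) (mf _))
  (fI a (Order.compl b)).
have fM2 := ae_iff_of_symd_null mu (mf _) (measurableI _ _ (mf _) (mf _))
  (fI b (Order.compl a)).
have fC1 := ae_iff_of_symd_null mu (mf _) (measurableC (mf _)) (fC b).
have fC2 := ae_iff_of_symd_null mu (mf _) (measurableC (mf _)) (fC a).
apply: filterS (filterI fJ (filterI fM1 (filterI fM2 (filterI fC1 fC2)))).
by move=> x /=; rewrite /symd /=; tauto.
Qed.

Variables (psi phi : BA -> set (cantor_cube K)).
Hypotheses (hpsi : is_hom_to_measure_algebra mu psi)
  (hphi : is_hom_to_measure_algebra mu phi).

Lemma symd_hom_bsymd a b : {ae mu, forall x,
  symd (psi (bsymd a b)) (phi (bsymd a b)) x <->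
  symd (symd (psi a) (phi a)) (symd (psi b) (phi b)) x}.
Proof.
apply: filterS (filterI (hom_bsymd a b hpsi) (hom_bsymd a b hphi)).
by move=> x; rewrite /symd /=; tauto_cases x.
Qed.

Lemma forces_eq_of_symd_le (e : R) : mu setT = 1%E -> e < 2^-1 ->
  (forall a, (mu (symd (psi a) (phi a)) <= e%:E)%E) ->
  exists p, [/\ measurable p, (0 < mu p)%E & forces_eq mu p psi phi].
Proof.
move=> mu1 e_lt S_le; have mu_fin : (mu setT < +oo)%E by rewrite mu1 ltry.
pose S a := symd (psi a) (phi a).
have mS a : measurable (S a).
  by case: hpsi hphi => [m1 _ _ _ _] [m2 _ _ _ _]; apply: measurableU;
    apply: measurableD.
have rmeasS a : rmeas mu (S a) <= e.
  by rewrite -lee_fin -(rmeasE mu mu_fin _ (mS a)); exact: S_le.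
have e_ge0 : 0 <= e := le_trans (rmeas_ge0 _ _) (rmeasS Order.bottom).
have cover_le l : rmeas mu (\big[setU/set0]_(a <- l) S a) <= 2 * e.
  rewrite -[X in rmeas _ X]setD0; apply: symd_closed_bigsetU_setD_le => //.
  - by move=> a b; exists (bsymd a b); exact: symd_hom_bsymd.
  - by move=> a; rewrite setD0.
have [D [mD D_le SD0]] := bigsetU_bounded_ae_cover mu mu_fin _ _ _ mS cover_le.
exists (~` D); split.
- exact: measurableC.
- have := rmeas_setDI mu mu_fin measurableT mD; rewrite setTD setTI.
  have : rmeas mu setT = 1 by rewrite /rmeas mu1.
  rewrite rmeasE ?lte_fin //; [lra|exact: measurableC].
- by move=> a; rewrite setIC -setDE; exact: SD0.
Qed.

End hom_to_measure_algebra.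

Theorem theorem7p5 (R : realType) (K : choiceType)
  (hK : infinite_set (@setT K))
  (mu : {measure set (cantor_cube K) -> \bar R})
  (hmu : is_product_measure mu)
  (d : Order.disp_t) (BA : ctbDistrLatticeType d)
  (phi_ : nat -> BA -> set (cantor_cube K)) (phi : BA -> set (cantor_cube K))
  (hphi_ : forall n, is_hom_to_measure_algebra mu (phi_ n))
  (hphi : is_hom_to_measure_algebra mu phi) :
  unif_conv mu phi_ phi ->
  exists N : nat, forall n, (N <= n)%N ->
    exists p : set (cantor_cube K),
      [/\ measurable p, (0 < mu p)%E & forces_eq mu p (phi_ n) phi].
Proof.
move=> phi_cvg.
have mu1 : mu setT = 1%E.
  have := hmu [::] (fun=> true) isT; rewrite expr0 => <-.
  by congr (mu _); apply/seteqP; split=> // x _ i; rewrite in_nil.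
have [|N N_lt] := phi_cvg 4^-1; first by rewrite invr_gt0.
exists N.+1 => n Nn.
apply: (forces_eq_of_symd_le _ _ _ (hphi_ n) hphi 4^-1 mu1).
- by lra.
- by move=> a; apply/ltW/N_lt.
Qed.
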